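(* Let $m\in\mathbb{N}$, $\boldsymbol{\sigma}\in\{0,1\}^m$, and let $\beta=\frac{\beta_1}{2}+\dots+\frac{\beta_m}{2^m}$ be $m$-bit. For $m$-bit $\alpha=\frac{\alpha_1}{2}+\dots+\frac{\alpha_m}{2^m}$ set $\alpha_{m+1}=0$, and let $j_1(u)=j(u;\alpha,\beta,\boldsymbol{\sigma})$ and $j_2(u)=j(u;\alpha,\beta,\boldsymbol{\sigma}^* )$ as defined in the context. Then: (1) For $u_1,u_2\in\{0,\dots,m-1\}$ with $u_1\ne u_2$, $$\sum_{\alpha\in\mathbb{Q}^*(2^m)}(\alpha_{m-u_1}\oplus\alpha_{m+1-j_1(u_1)})(\alpha_{m-u_2}\oplus\alpha_{m+1-j_2(u_2)})=2^{m-2}.$$ (2) For $u\in\{0,\dots,m-1\}$, $$\sum_{\alpha\in\mathbb{Q}^*(2^m)}(\alpha_{m-u}\oplus\alpha_{m+1-j_1(u)})(\alpha_{m-u}\oplus\alpha_{m+1-j_2(u)})=\begin{cases}2^{m-u-1} & \text{if } u\in\{0,1\},\\ 2^{m-u-1}\left(1+\sum_{j=1}^{u-1}2^j\big((\gamma_j\oplus1)\gamma_u+\gamma_j(\gamma_u\oplus1)\big)\right) & \text{if } u\in\{2,\dots,m-1\},\end{cases}$$ where $\gamma_j:=\beta_j\oplus\sigma_j$ for $j\in\{1,\dots,m-1\}$.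
   Context: $\oplus$ denotes addition modulo 2. A real number $\alpha\in[0,1)$ is called $m$-bit if $\alpha\in\mathbb{Q}(2^m):=\{0,\frac1{2^m},\dots,\frac{2^m-1}{2^m}\}$, i.e. $\alpha=\frac{\alpha_1}{2}+\dots+\frac{\alpha_m}{2^m}$ with $\alpha_j\in\{0,1\}$; $\mathbb{Q}^*(2^m):=\mathbb{Q}(2^m)\setminus\{0\}$. For $\boldsymbol{\sigma}=(\sigma_1,\dots,\sigma_m)\in\{0,1\}^m$, $\boldsymbol{\sigma}^*=(\sigma_1\oplus1,\dots,\sigma_m\oplus1)$. For $m$-bit $\alpha,\beta$, a shift $\boldsymbol{\tau}\in\{0,1\}^m$ and $0\le u\le m-1$, define $j(u;\alpha,\beta,\boldsymbol{\tau})=0$ if $u=0$; $j(u;\alpha,\beta,\boldsymbol{\tau})=0$ if $\alpha_{m+1-j}=\beta_j\oplus\tau_j$ for all $j=1,\dots,u$; and otherwise $j(u;\alpha,\beta,\boldsymbol{\tau})=\max\{j\le u:\alpha_{m+1-j}\ne\beta_j\oplus\tau_j\}$. *)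

From mathcomp Require Import all_boot.
Set Implicit Arguments. Unset Strict Implicit. Unset Printing Implicit Defensive.

(* An m-bit number alpha in Q(2^m) is represented by the natural number
   k = 2^m * alpha, with k < 2^m.  Its binary digits alpha_1 ... alpha_m
   (alpha = alpha_1/2 + ... + alpha_m/2^m) are
   alpha_j = bit (m - j) of k, for 1 <= j <= m; we set alpha_j = 0 (false)
   outside 1..m (in particular alpha_{m+1} = 0, as in the paper). *)
Definition digit (m k j : nat) : bool :=
  if (1 <= j <= m) then odd (k %/ 2 ^ (m - j)) else false.

Definition tcomp (m : nat) (tau : m.-tuple bool) (j : nat) : bool :=
  nth false tau j.-1.

Definition tstar (m : nat) (tau : m.-tuple bool) : m.-tuple bool :=
  [tuple of map negb tau].

(* j(u; alpha, beta, tau): the largest j in 1..u with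
   alpha_{m+1-j} <> beta_j (+) tau_j, and 0 if there is none (or u = 0). *)
Definition jidx (m u a b : nat) (tau : m.-tuple bool) : nat :=
  \max_(1 <= j < u.+1 | digit m a (m + 1 - j) != addb (digit m b j) (tcomp tau j)) j.

From mathcomp Require Import all_boot zify.

(* Write [a = 2^m alpha] and let bit [i] of [a] be [alpha_{m-i}].  Adding [2^u]
   to an [a < 2^u] flips [alpha_{m-u}] and leaves [j(u)] and [alpha_{m+1-j(u)}]
   unchanged, so each summand [alpha_{m-u} (+) alpha_{m+1-j(u)}] is flipped on
   the pairs [(a, a + 2^u)] and depends only on [a mod 2^(u+1)].  For
   [u1 < u2] this pairing, applied at [u2], halves the sum of products down to
   the sum of a single summand, which is [2^(m-2)].  For [u1 = u2 = u] the
   pairing reduces the sum to counting the [a < 2^u] on which [alpha_{m+1-j(u)}]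
   agrees for [sigma] and [sigma^*]; splitting once more on bit [u - 1] turns
   this into counts of the values of [alpha_{m+1-j(u-1)}], which satisfy a
   one-step recursion in [u] whose solution is the sum over [j] of the
   statement. *)

Definition bitn (i a : nat) : bool := odd (a %/ 2 ^ i).

Definition bit_below (k a : nat) : bool := if k is k'.+1 then bitn k' a else false.

(* With [h j = beta_j (+) tau_j], [last_mismatch h u a] is [j(u; alpha, beta, tau)]
   and [mismatch_bit h u a] is [alpha_{m+1-j(u)}]. *)
Definition last_mismatch (h : nat -> bool) (u a : nat) : nat :=
  \max_(1 <= j < u.+1 | bitn j.-1 a != h j) j.

Definition mismatch_bit (h : nat -> bool) (u a : nat) : bool :=
  bit_below (last_mismatch h u a) a.

Definition xor_mismatch (h : nat -> bool) (u a : nat) : bool :=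
  addb (bitn u a) (mismatch_bit h u a).

Lemma bitn_small n a : a < 2 ^ n -> bitn n a = false.
Proof. by move=> lt_a; rewrite /bitn divn_small. Qed.

Lemma bitn_add_pow2 n a : a < 2 ^ n -> bitn n (a + 2 ^ n) = true.
Proof. by move=> lt_a; rewrite /bitn divnDr // divn_small // divnn expn_gt0. Qed.

Lemma bitn_add_pow2_low i n a : i < n -> bitn i (a + 2 ^ n) = bitn i a.
Proof.
move=> lt_in; rewrite /bitn divnDr; last by rewrite dvdn_exp2l // ltnW.
rewrite -(expnB (isT : 0 < 2) (ltnW lt_in)) oddD oddX.
by rewrite subn_eq0 leqNgt lt_in addbF.
Qed.

Lemma bit_below_add_pow2 k n a : k <= n -> bit_below k (a + 2 ^ n) = bit_below k a.
Proof. by case: k => //= k lt_kn; rewrite bitn_add_pow2_low. Qed.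

Lemma last_mismatch_le h u a : last_mismatch h u a <= u.
Proof.
by rewrite /last_mismatch big_nat_cond; apply/bigmax_leqP_seq => j _ /andP[/andP[]].
Qed.

Lemma eq_last_mismatch_in h h' u a a' :
  (forall j, 0 < j <= u -> (bitn j.-1 a != h j) = (bitn j.-1 a' != h' j)) ->
  last_mismatch h u a = last_mismatch h' u a'.
Proof.
move=> eq_hh'; rewrite /last_mismatch big_nat_cond [RHS]big_nat_cond.
by apply: eq_bigl => j; case: (boolP (1 <= j < u.+1)) => //= /eq_hh'->.
Qed.

Lemma last_mismatch_add_pow2 h u n a :
  u <= n -> last_mismatch h u (a + 2 ^ n) = last_mismatch h u a.
Proof.
move=> le_un; apply: eq_last_mismatch_in => j /andP[j_gt0 le_ju].
by rewrite bitn_add_pow2_low //; lia.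
Qed.

Lemma last_mismatch0 h a : last_mismatch h 0 a = 0.
Proof. by rewrite /last_mismatch big_geq. Qed.

Lemma last_mismatchS h v a :
  last_mismatch h v.+1 a = if bitn v a != h v.+1 then v.+1 else last_mismatch h v a.
Proof.
rewrite /last_mismatch big_mkcond big_nat_recr //= -big_mkcond.
case: ifP => _; last by rewrite maxn0.
by apply/maxn_idPr; apply: leqW; apply: last_mismatch_le.
Qed.

Lemma mismatch_bit0 h a : mismatch_bit h 0 a = false.
Proof. by rewrite /mismatch_bit last_mismatch0. Qed.

Lemma mismatch_bit_add_pow2 h u n a :
  u <= n -> mismatch_bit h u (a + 2 ^ n) = mismatch_bit h u a.
Proof.
move=> le_un; rewrite /mismatch_bit last_mismatch_add_pow2 // bit_below_add_pow2 //.
exact: leq_trans (last_mismatch_le _ _ _) le_un.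
Qed.

Lemma mismatch_bitS_low h v a : a < 2 ^ v ->
  mismatch_bit h v.+1 a = if h v.+1 then false else mismatch_bit h v a.
Proof.
move=> lt_a; rewrite /mismatch_bit last_mismatchS bitn_small //.
by case: (h v.+1) => //=; rewrite bitn_small.
Qed.

Lemma mismatch_bitS_high h v a : a < 2 ^ v ->
  mismatch_bit h v.+1 (a + 2 ^ v) = if h v.+1 then mismatch_bit h v a else true.
Proof.
move=> lt_a; rewrite /mismatch_bit last_mismatchS bitn_add_pow2 //.
case: (h v.+1) => /=; last by rewrite bitn_add_pow2.
by rewrite last_mismatch_add_pow2 // bit_below_add_pow2 // last_mismatch_le.
Qed.

Lemma xor_mismatch0 h u : xor_mismatch h u 0 = false.
Proof.
have bitn0 i : bitn i 0 = false by rewrite /bitn div0n.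
rewrite /xor_mismatch /mismatch_bit bitn0.
by case: last_mismatch => //= k; rewrite bitn0.
Qed.

Lemma xor_mismatch_add_pow2 h u n a :
  u < n -> xor_mismatch h u (a + 2 ^ n) = xor_mismatch h u a.
Proof.
move=> lt_un.
by rewrite /xor_mismatch bitn_add_pow2_low // mismatch_bit_add_pow2 // ltnW.
Qed.

Lemma xor_mismatch_flip h u a :
  a < 2 ^ u -> xor_mismatch h u (a + 2 ^ u) = ~~ xor_mismatch h u a.
Proof.
move=> lt_a.
by rewrite /xor_mismatch mismatch_bit_add_pow2 // bitn_add_pow2 // bitn_small.
Qed.

Lemma eq_xor_mismatch_in h h' u a :
  (forall j, 0 < j <= u -> h j = h' j) -> xor_mismatch h u a = xor_mismatch h' u a.
Proof.
move=> eq_hh'; rewrite /xor_mismatch /mismatch_bit.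
by rewrite (@eq_last_mismatch_in h h' u a a) // => j /eq_hh'->.
Qed.

Lemma big_nat_pow2S n (F : nat -> nat) :
  \sum_(0 <= a < 2 ^ n.+1) F a = \sum_(0 <= a < 2 ^ n) (F a + F (a + 2 ^ n)).
Proof.
rewrite big_split /= expnS mul2n -addnn (@big_cat_nat _ _ _ (2 ^ n)) ?leq_addr //.
by rewrite -{2}(add0n (2 ^ n)) big_addn addnK.
Qed.

Lemma sum_pow2_periodic n m (F : nat -> nat) :
  (forall N a, n <= N -> F (a + 2 ^ N) = F a) -> n <= m ->
  \sum_(0 <= a < 2 ^ m) F a = 2 ^ (m - n) * \sum_(0 <= a < 2 ^ n) F a.
Proof.
move=> F_periodic le_nm; rewrite -(subnKC le_nm) addKn.
elim: (m - n) => [|k IHk]; first by rewrite addn0 mul1n.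
rewrite addnS big_nat_pow2S big_split /= IHk.
rewrite [X in _ + X](eq_bigr F) => [|a _]; last by rewrite F_periodic // leq_addr.
by rewrite IHk expnS mul2n -addnn mulnDl.
Qed.

Lemma sum_xor_mismatch h u : \sum_(0 <= a < 2 ^ u.+1) xor_mismatch h u a = 2 ^ u.
Proof.
rewrite big_nat_pow2S (eq_big_nat _ _ (F2 := fun=> 1)) => [|a /andP[_ lt_a]].
  by rewrite sum_nat_const_nat subn0 muln1.
by rewrite xor_mismatch_flip //; case: xor_mismatch.
Qed.

Lemma sum_xor_mismatch_mul_lt h1 h2 u1 u2 m : u1 < u2 -> u2 < m ->
  \sum_(0 <= a < 2 ^ m) xor_mismatch h1 u1 a * xor_mismatch h2 u2 a = 2 ^ (m - 2).
Proof.
move=> lt12 lt2m; rewrite (@sum_pow2_periodic u2.+1) //; last first.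
  by move=> N a le_N; rewrite !xor_mismatch_add_pow2 //; lia.
rewrite big_nat_pow2S
  (eq_big_nat _ _ (F2 := fun a => nat_of_bool (xor_mismatch h1 u1 a))).
  rewrite (@sum_pow2_periodic u1.+1) // => [|N a le_N].
    by rewrite sum_xor_mismatch -!expnD; congr (2 ^ _); lia.
  by rewrite xor_mismatch_add_pow2.
move=> a /andP[_ lt_a]; rewrite xor_mismatch_flip // xor_mismatch_add_pow2 //.
by case: xor_mismatch; case: xor_mismatch.
Qed.

Lemma sum_xor_mismatch_mul_neq h1 h2 u1 u2 m : u1 != u2 -> u1 < m -> u2 < m ->
  \sum_(0 <= a < 2 ^ m) xor_mismatch h1 u1 a * xor_mismatch h2 u2 a = 2 ^ (m - 2).
Proof.
move=> neq12 lt1m lt2m; case: ltngtP neq12 => // lt_u _.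
  exact: sum_xor_mismatch_mul_lt.
under eq_bigr do rewrite mulnC.
exact: sum_xor_mismatch_mul_lt.
Qed.

Lemma sum_xor_mismatch_mul h1 h2 u :
  \sum_(0 <= a < 2 ^ u.+1) xor_mismatch h1 u a * xor_mismatch h2 u a =
  \sum_(0 <= a < 2 ^ u) (mismatch_bit h1 u a == mismatch_bit h2 u a).
Proof.
rewrite big_nat_pow2S; apply: eq_big_nat => a /andP[_ lt_a].
rewrite !xor_mismatch_flip // /xor_mismatch bitn_small //=.
by case: mismatch_bit; case: mismatch_bit.
Qed.

Definition mismatch_count (h : nat -> bool) (v : nat) (c : bool) : nat :=
  \sum_(0 <= a < 2 ^ v) (mismatch_bit h v a == c).

Lemma mismatch_countS h v c :
  mismatch_count h v.+1 c = mismatch_count h v c + 2 ^ v * (h v.+1 != c).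
Proof.
rewrite /mismatch_count big_nat_pow2S.
under eq_big_nat => a /andP[_ lt_a]
  do rewrite mismatch_bitS_high // mismatch_bitS_low //.
by case: (h v.+1); case: c; rewrite big_split sum_nat_const_nat subn0 /=
  ?(muln0, muln1, mul0n, mul1n, addn0) // addnC.
Qed.

Lemma mismatch_countE h v c :
  mismatch_count h v c = (c == false) + \sum_(1 <= j < v.+1) 2 ^ j.-1 * (h j != c).
Proof.
elim: v => [|v IHv].
  by rewrite /mismatch_count expn0 big_nat1 mismatch_bit0 big_geq // addn0 eq_sym.
by rewrite mismatch_countS IHv [in RHS]big_nat_recr //= addnA.
Qed.

Lemma sum_mismatch_bit_eq_neg g v :
  \sum_(0 <= a < 2 ^ v.+1)
     (mismatch_bit g v.+1 a == mismatch_bit (fun j => ~~ g j) v.+1 a) =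
  mismatch_count g v (g v.+1) + mismatch_count (fun j => ~~ g j) v (~~ g v.+1).
Proof.
rewrite big_nat_pow2S.
under eq_big_nat => a /andP[_ lt_a]
  do rewrite !mismatch_bitS_high // !mismatch_bitS_low //.
rewrite big_split /=; case: (g v.+1) => /=; first rewrite addnC;
  by congr (_ + _); apply: eq_bigr => a _; case: mismatch_bit.
Qed.

Lemma sum_xor_mismatch_mul_neg g u :
  \sum_(0 <= a < 2 ^ u.+1) xor_mismatch g u a * xor_mismatch (fun j => ~~ g j) u a =
  1 + \sum_(1 <= j < u) 2 ^ j * (g j != g u).
Proof.
rewrite sum_xor_mismatch_mul; case: u => [|v].
  by rewrite big_nat1 !mismatch_bit0 big_geq.
rewrite sum_mismatch_bit_eq_neg !mismatch_countE addnACA -big_split /=.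
congr (_ + _); first by case: (g v.+1).
apply: eq_big_nat => -[|j] // _.
by rewrite (inj_eq negb_inj) expnS /= addnn -mul2n mulnA.
Qed.

Lemma digit_bitn m a u : u < m -> digit m a (m - u) = bitn u a.
Proof.
move=> lt_um; rewrite /digit ifT; first by rewrite subKn // ltnW.
by apply/andP; split; lia.
Qed.

Lemma digit_bit_below m a k : k <= m -> digit m a (m + 1 - k) = bit_below k a.
Proof.
rewrite /digit; case: k => [|k] le_km.
  by rewrite ifF //; apply/negbTE; lia.
rewrite ifT; last by apply/andP; split; lia.
by congr (odd (_ %/ 2 ^ _)); lia.
Qed.

Lemma digit_xor_jidx m u a b (tau : m.-tuple bool) : u < m ->
  addb (digit m a (m - u)) (digit m a (m + 1 - jidx u a b tau)) =
  xor_mismatch (fun j => addb (digit m b j) (tcomp tau j)) u a.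
Proof.
move=> lt_um; have jidxE : jidx u a b tau =
    last_mismatch (fun j => addb (digit m b j) (tcomp tau j)) u a.
  rewrite /jidx /last_mismatch big_nat_cond [RHS]big_nat_cond.
  apply: eq_bigl => -[|j] //=; rewrite ltnS; case: (ltnP j u) => //= lt_ju.
  by rewrite digit_bit_below //; lia.
rewrite jidxE digit_bitn // digit_bit_below //.
exact: leq_trans (last_mismatch_le _ _ _) (ltnW lt_um).
Qed.

Lemma tcomp_tstar m (tau : m.-tuple bool) j : 0 < j <= m ->
  tcomp (tstar tau) j = ~~ tcomp tau j.
Proof.
by move=> /andP[j_gt0 le_jm]; rewrite /tcomp (nth_map false) ?size_tuple //; lia.
Qed.

Theorem lemma3 (m : nat) (sigma : m.-tuple bool) (b : nat) (hb : b < 2 ^ m) :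
  (forall u1 u2 : nat, u1 < m -> u2 < m -> u1 <> u2 ->
     \sum_(1 <= a < 2 ^ m)
        (addb (digit m a (m - u1)) (digit m a (m + 1 - jidx u1 a b sigma))
         * addb (digit m a (m - u2)) (digit m a (m + 1 - jidx u2 a b (tstar sigma))))
     = 2 ^ (m - 2))
  /\
  (forall u : nat, u < m ->
     \sum_(1 <= a < 2 ^ m)
        (addb (digit m a (m - u)) (digit m a (m + 1 - jidx u a b sigma))
         * addb (digit m a (m - u)) (digit m a (m + 1 - jidx u a b (tstar sigma))))
     = (if u <= 1 then 2 ^ (m - u - 1)
        else 2 ^ (m - u - 1) *
             (1 + \sum_(1 <= j < u)
                    2 ^ j * (~~ addb (digit m b j) (tcomp sigma j)
                               * addb (digit m b u) (tcomp sigma u)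
                             + addb (digit m b j) (tcomp sigma j)
                               * ~~ addb (digit m b u) (tcomp sigma u))))).
Proof.
pose g j := addb (digit m b j) (tcomp sigma j).
have termE u a : u < m ->
    addb (digit m a (m - u)) (digit m a (m + 1 - jidx u a b sigma)) =
    xor_mismatch g u a.
  exact: digit_xor_jidx.
have termE_star u a : u < m ->
    addb (digit m a (m - u)) (digit m a (m + 1 - jidx u a b (tstar sigma))) =
    xor_mismatch (fun j => ~~ g j) u a.
  move=> lt_um; rewrite digit_xor_jidx //; apply: eq_xor_mismatch_in => j le_ju.
  by rewrite tcomp_tstar ?addbN //; lia.
have sum_from0 (F : nat -> nat) :
    F 0 = 0 -> \sum_(1 <= a < 2 ^ m) F a = \sum_(0 <= a < 2 ^ m) F a.
  by move=> F0; rewrite [RHS]big_ltn ?expn_gt0 // F0.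
split=> [u1 u2 lt1m lt2m /eqP neq12 | u lt_um].
  under eq_bigr do rewrite termE // termE_star //.
  by rewrite sum_from0 ?xor_mismatch0 // sum_xor_mismatch_mul_neq.
under eq_bigr do rewrite termE // termE_star //.
rewrite sum_from0 ?xor_mismatch0 // (@sum_pow2_periodic u.+1) //; last first.
  by move=> N a le_N; rewrite !xor_mismatch_add_pow2.
rewrite sum_xor_mismatch_mul_neg subnS subn1.
case: leqP => [le_u1 | _]; first by rewrite big_geq ?muln1.
by congr (_ * (1 + _)); apply: eq_bigr => j _; rewrite /g; do 2 case: addb.
Qed.
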